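(* For all integers $t\ge0$ and $k\ge1$, \[D(2^{k+1}t+2^k-1)\ge\min\bigl(D(t),D(t+1)\bigr)+\frac{k}{2^{k-1}}.\]
   Context: $s(n)$ is the number of $1$s in the binary expansion of $n\ge0$; $\delta(j,t)=\lim_{N\to\infty}\frac1N|\{0\le n<N: s(n+t)-s(n)=j\}|$ for $j\in\mathbb Z$, a probability distribution on $\mathbb Z$, and $\kappa_j(t)$ denotes its $j$-th cumulant ($\log\sum_k\delta(k,t)e^{2\pi ik\vartheta}=\sum_{j\ge0}\frac{\kappa_j(t)}{j!}(2\pi i\vartheta)^j$ near $\vartheta=0$). Set $D(t)=\kappa_2(t)-\kappa_3(t)/3$. *)

From Stdlib Require Import Reals ZArith Arith List Lra Lia.
From Coquelicot Require Import Coquelicot.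
Open Scope R_scope.

(* s(n): number of 1s in the binary expansion of n (fuel n suffices). *)
Fixpoint binsum_aux (fuel n : nat) : nat :=
  match fuel with
  | O => O
  | S f => (n mod 2 + binsum_aux f (n / 2))%nat
  end.
Definition binsum (n : nat) : nat := binsum_aux n n.

Definition count_diff (j : Z) (t N : nat) : nat :=
  length (filter (fun n => Z.eqb (Z.of_nat (binsum (n + t)) - Z.of_nat (binsum n)) j)
                 (seq 0 N)).

Definition delta (j : Z) (t : nat) : R :=
  real (Lim_seq (fun N => INR (count_diff j t N) / INR N)).

(* r-th moment sum_{j in Z} j^r delta(j,t), summed symmetrically over |j| = k *)
Definition moment (r t : nat) : R :=
  Series (fun k : nat =>
    if Nat.eqb k 0 then (0 ^ r) * delta 0 t
    else (INR k) ^ r * delta (Z.of_nat k) t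
         + (- INR k) ^ r * delta (- Z.of_nat k)%Z t).

(* Cumulants from moments, via the coefficient identity of
   log (sum_r m_r x^r / r!) = sum_j kappa_j x^j / j!  (with m_0 = 1):
   kappa_0 = 0,  kappa_n = m_n - sum_{k=1}^{n-1} C(n-1,k-1) kappa_k m_{n-k}. *)
Fixpoint cum_aux (m : nat -> R) (fuel n : nat) : R :=
  match fuel with
  | O => 0
  | S f =>
    if Nat.eqb n 0 then 0
    else m n - fold_right Rplus 0
           (map (fun k => Binomial.C (n - 1) (k - 1) * cum_aux m f k * m (n - k)%nat)
                (seq 1 (n - 1)))
  end.
Definition cumulant_of (m : nat -> R) (n : nat) : R := cum_aux m n n.

Definition kappa (j t : nat) : R := cumulant_of (fun r => moment r t) j.

Definition D (t : nat) : R := kappa 2 t - kappa 3 t / 3.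

(* Write d_t(n) = s(n + t) - s(n).  Splitting n by parity gives
   d_(2t)(2n) = d_(2t)(2n+1) = d_t(n), d_(2t+1)(2n) = d_t(n) + 1 and
   d_(2t+1)(2n+1) = d_(t+1)(n) - 1.  Below 2^l - t the values of d_t are
   2^l-periodic, so the frequencies of d_t on the window n < 2^l - t bound
   delta(., t) from below and converge to it; in particular the tail mass at
   |j| = k is at most t / 2^(k-1).  Hence the moments m_r(t), r <= 3, are limits
   of window averages and inherit the recurrences m_r(2t) = m_r(t) and
   m_r(2t+1) = (E (X_t + 1)^r + E (X_(t+1) - 1)^r) / 2, where X_t ~ delta(., t).
   It follows that m_1 = 0, |m_2(t) - m_2(t+1)| <= 2, D = m_2 - m_3 / 3 and
   D(2u+1) = (D(u) + D(u+1)) / 2 + 1 - (m_2(u) - m_2(u+1)) / 2.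
   Iterating u |-> 2u+1 from u = 2t reaches 2^(k+1) t + 2^k - 1 after k steps;
   the resulting affine recurrence solves to
     2^k (D(2^(k+1) t + 2^k - 1) - D(2t+1))
       = D(t) - D(2t+1) + k (3 - (m_2(t) - m_2(t+1)) / 2),
   and D(2t+1) >= min(D(t), D(t+1)) gives the bound. *)

From Stdlib Require Import Reals ZArith List Lra Lia Psatz.
From Coquelicot Require Import Coquelicot.
Open Scope R_scope.

(** * Binary digit sums *)

Lemma binsum_aux_0 f : binsum_aux f 0 = 0%nat.
Proof. induction f; simpl; auto. Qed.

Lemma binsum_aux_fuel f1 f2 n :
  (n <= f1)%nat -> (n <= f2)%nat -> binsum_aux f1 n = binsum_aux f2 n.
Proof.
  revert f2 n; induction f1 as [|f1 IH]; intros f2 n H1 H2.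
  - replace n with 0%nat by lia. now rewrite !binsum_aux_0.
  - destruct f2 as [|f2].
    + replace n with 0%nat by lia. now rewrite !binsum_aux_0.
    + cbn [binsum_aux]. f_equal. destruct (Nat.eq_dec n 0) as [->|Hn].
      * now rewrite !binsum_aux_0.
      * assert (n / 2 < n)%nat by (apply Nat.div_lt; lia). apply IH; lia.
Qed.

Lemma binsum_double_add n b : (b < 2)%nat -> binsum (2 * n + b) = (b + binsum n)%nat.
Proof.
  intros Hb. unfold binsum.
  destruct (2 * n + b)%nat as [|m] eqn:E.
  - assert (n = 0%nat /\ b = 0%nat) as [-> ->] by lia. reflexivity.
  - cbn [binsum_aux]. rewrite <- E.
    replace ((2 * n + b) mod 2)%nat with b.
    2:{ rewrite Nat.add_comm, Nat.mul_comm, Nat.Div0.mod_add. rewrite Nat.mod_small; lia. }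
    replace ((2 * n + b) / 2)%nat with n.
    2:{ rewrite Nat.add_comm, Nat.mul_comm, Nat.div_add by lia. rewrite Nat.div_small; lia. }
    f_equal. apply binsum_aux_fuel; lia.
Qed.

Lemma binsum_div2 m : binsum m = (m mod 2 + binsum (m / 2))%nat.
Proof.
  rewrite (Nat.div_mod m 2) at 1 by lia.
  apply binsum_double_add, Nat.mod_upper_bound; lia.
Qed.

Lemma binsum_mul_pow2_add l a m :
  (m < 2 ^ l)%nat -> binsum (a * 2 ^ l + m) = (binsum a + binsum m)%nat.
Proof.
  revert m; induction l as [|l IH]; intros m Hm.
  - simpl in Hm. replace m with 0%nat by lia.
    rewrite Nat.mul_1_r, Nat.add_0_r. change (binsum 0) with 0%nat. lia.
  - assert (m / 2 < 2 ^ l)%nat.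
    { rewrite Nat.pow_succ_r' in Hm. apply Nat.Div0.div_lt_upper_bound. lia. }
    pose proof (Nat.mod_upper_bound m 2 ltac:(lia)).
    replace (a * 2 ^ S l + m)%nat with (2 * (a * 2 ^ l + m / 2) + m mod 2)%nat
      by (rewrite Nat.pow_succ_r'; pose proof (Nat.div_mod m 2 ltac:(lia)); lia).
    rewrite binsum_double_add, IH, (binsum_div2 m) by lia. lia.
Qed.

Lemma binsum_lt_pow2 l m : (m < 2 ^ l)%nat -> (binsum m <= l)%nat.
Proof.
  revert m; induction l as [|l IH]; intros m Hm.
  - simpl in Hm. replace m with 0%nat by lia. change (binsum 0) with 0%nat. lia.
  - assert (m / 2 < 2 ^ l)%nat.
    { rewrite Nat.pow_succ_r' in Hm. apply Nat.Div0.div_lt_upper_bound. lia. }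
    pose proof (Nat.mod_upper_bound m 2 ltac:(lia)).
    rewrite binsum_div2. specialize (IH _ H). lia.
Qed.

Definition digit_diff (t n : nat) : Z :=
  (Z.of_nat (binsum (n + t)) - Z.of_nat (binsum n))%Z.

Lemma digit_diff_even_even t n : digit_diff (2 * t) (2 * n) = digit_diff t n.
Proof.
  unfold digit_diff. replace (2 * n + 2 * t)%nat with (2 * (n + t) + 0)%nat by lia.
  rewrite <- (Nat.add_0_r (2 * n)), !binsum_double_add by lia. lia.
Qed.

Lemma digit_diff_even_odd t n : digit_diff (2 * t) (2 * n + 1) = digit_diff t n.
Proof.
  unfold digit_diff. replace (2 * n + 1 + 2 * t)%nat with (2 * (n + t) + 1)%nat by lia.
  rewrite !binsum_double_add by lia. lia.
Qed.

Lemma digit_diff_odd_even t n : digit_diff (2 * t + 1) (2 * n) = (digit_diff t n + 1)%Z.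
Proof.
  unfold digit_diff. replace (2 * n + (2 * t + 1))%nat with (2 * (n + t) + 1)%nat by lia.
  rewrite <- (Nat.add_0_r (2 * n)), !binsum_double_add by lia. lia.
Qed.

Lemma digit_diff_odd_odd t n :
  digit_diff (2 * t + 1) (2 * n + 1) = (digit_diff (t + 1) n - 1)%Z.
Proof.
  unfold digit_diff. replace (2 * n + 1 + (2 * t + 1))%nat with (2 * (n + (t + 1)) + 0)%nat by lia.
  rewrite !binsum_double_add by lia. lia.
Qed.

Lemma digit_diff_mul_pow2_add t l c m :
  (m + t < 2 ^ l)%nat -> digit_diff t (c * 2 ^ l + m) = digit_diff t m.
Proof.
  intros H. unfold digit_diff.
  replace (c * 2 ^ l + m + t)%nat with (c * 2 ^ l + (m + t))%nat by lia.
  rewrite !binsum_mul_pow2_add by lia. lia.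
Qed.

Lemma digit_diff_bound t l m :
  (m + t < 2 ^ l)%nat -> (Z.abs (digit_diff t m) <= Z.of_nat l)%Z.
Proof.
  intros H. unfold digit_diff.
  pose proof (binsum_lt_pow2 l (m + t) H). pose proof (binsum_lt_pow2 l m ltac:(lia)). lia.
Qed.

Lemma digit_diff_window_bound t l K n :
  (l <= K)%nat -> (n < 2 ^ l - t)%nat -> (Z.abs (digit_diff t n) <= Z.of_nat K)%Z.
Proof. intros HK Hn. pose proof (digit_diff_bound t l n ltac:(lia)). lia. Qed.

(** * Finite sums and sums over [|j| <= K] *)

Fixpoint rsum (g : nat -> R) (n : nat) : R :=
  match n with O => 0 | S n => rsum g n + g n end.

Lemma rsum_ext g h n : (forall i, (i < n)%nat -> g i = h i) -> rsum g n = rsum h n.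
Proof.
  induction n as [|n IH]; intros H; simpl; auto.
  rewrite IH by (intros; apply H; lia). now rewrite H by lia.
Qed.

Lemma rsum_add_range g a b : rsum g (a + b) = rsum g a + rsum (fun i => g (a + i)%nat) b.
Proof.
  induction b as [|b IH]; simpl; [rewrite Nat.add_0_r; lra|].
  rewrite Nat.add_succ_r; simpl. rewrite IH; lra.
Qed.

Lemma rsum_nonneg g n : (forall i, 0 <= g i) -> 0 <= rsum g n.
Proof. intros H; induction n; simpl; [lra|]. specialize (H n); lra. Qed.

Lemma rsum_le g h n : (forall i, (i < n)%nat -> g i <= h i) -> rsum g n <= rsum h n.
Proof.
  induction n as [|n IH]; intros H; simpl; [lra|].
  assert (g n <= h n) by (apply H; lia).
  assert (rsum g n <= rsum h n) by (apply IH; intros; apply H; lia). lra.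
Qed.

Lemma rsum_plus g h n : rsum (fun i => g i + h i) n = rsum g n + rsum h n.
Proof. induction n; simpl; lra. Qed.

Lemma rsum_minus g h n : rsum (fun i => g i - h i) n = rsum g n - rsum h n.
Proof. induction n; simpl; lra. Qed.

Lemma rsum_scal c g n : rsum (fun i => c * g i) n = c * rsum g n.
Proof. induction n; simpl; lra. Qed.

Lemma rsum_const c n : rsum (fun _ => c) n = c * INR n.
Proof. induction n; simpl rsum; [simpl; lra|]. rewrite S_INR; lra. Qed.

Lemma rsum_abs g n : Rabs (rsum g n) <= rsum (fun i => Rabs (g i)) n.
Proof.
  induction n; simpl; [rewrite Rabs_R0; lra|].
  eapply Rle_trans; [apply Rabs_triang | lra].
Qed.

Lemma rsum_le_card g n : (forall i, 0 <= g i <= 1) -> 0 <= rsum g n <= INR n.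
Proof.
  intros H. split; [apply rsum_nonneg; apply H|].
  rewrite <- (Rmult_1_l (INR n)), <- rsum_const. apply rsum_le. intros; apply H.
Qed.

Lemma rsum_double g n :
  rsum g (2 * n) = rsum (fun i => g (2 * i)%nat + g (2 * i + 1)%nat) n.
Proof.
  induction n as [|n IH]; [reflexivity|].
  replace (2 * S n)%nat with (S (S (2 * n))) by lia.
  change (rsum g (S (S (2 * n)))) with (rsum g (2 * n) + g (2 * n)%nat + g (S (2 * n))).
  rewrite IH. replace (S (2 * n)) with (2 * n + 1)%nat by lia. simpl; ring.
Qed.

Lemma rsum_double_pred g n :
  rsum g (2 * n - 1)
  = rsum (fun i => g (2 * i)%nat) n + rsum (fun i => g (2 * i + 1)%nat) (n - 1).
Proof.
  destruct n as [|n]; [simpl; ring|].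
  replace (2 * S n - 1)%nat with (S (2 * n)) by lia. replace (S n - 1)%nat with n by lia.
  change (rsum g (S (2 * n))) with (rsum g (2 * n) + g (2 * n)%nat).
  change (rsum (fun i => g (2 * i)%nat) (S n))
    with (rsum (fun i => g (2 * i)%nat) n + g (2 * n)%nat).
  rewrite rsum_double, rsum_plus. ring.
Qed.

Definition ind (b : bool) : R := if b then 1 else 0.

Lemma ind_bounds b : 0 <= ind b <= 1.
Proof. destruct b; simpl; lra. Qed.

Definition sym_term (h : Z -> R) (k : nat) : R :=
  if Nat.eqb k 0 then h 0%Z else h (Z.of_nat k) + h (- Z.of_nat k)%Z.

Definition zsum (h : Z -> R) (K : nat) : R := rsum (sym_term h) (S K).

Lemma sym_term_ext h1 h2 k : (forall j, h1 j = h2 j) -> sym_term h1 k = sym_term h2 k.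
Proof. intros H; unfold sym_term; destruct Nat.eqb; rewrite ?H; auto. Qed.

Lemma sym_term_plus h1 h2 k :
  sym_term (fun j => h1 j + h2 j) k = sym_term h1 k + sym_term h2 k.
Proof. unfold sym_term; destruct Nat.eqb; lra. Qed.

Lemma sym_term_minus h1 h2 k :
  sym_term (fun j => h1 j - h2 j) k = sym_term h1 k - sym_term h2 k.
Proof. unfold sym_term; destruct Nat.eqb; lra. Qed.

Lemma sym_term_scal c h k : sym_term (fun j => c * h j) k = c * sym_term h k.
Proof. unfold sym_term; destruct Nat.eqb; lra. Qed.

Lemma sym_term_nonneg h k : (forall j, 0 <= h j) -> 0 <= sym_term h k.
Proof.
  intros H; unfold sym_term; destruct Nat.eqb; [apply H|].
  pose proof (H (Z.of_nat k)); pose proof (H (- Z.of_nat k)%Z); lra.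
Qed.

Lemma zsum_ext h1 h2 K : (forall j, h1 j = h2 j) -> zsum h1 K = zsum h2 K.
Proof. intros H; apply rsum_ext; intros; apply sym_term_ext, H. Qed.

Lemma zsum_plus h1 h2 K : zsum (fun j => h1 j + h2 j) K = zsum h1 K + zsum h2 K.
Proof. unfold zsum. rewrite <- rsum_plus. apply rsum_ext; intros; apply sym_term_plus. Qed.

Lemma zsum_minus h1 h2 K : zsum (fun j => h1 j - h2 j) K = zsum h1 K - zsum h2 K.
Proof. unfold zsum. rewrite <- rsum_minus. apply rsum_ext; intros; apply sym_term_minus. Qed.

Lemma zsum_scal c h K : zsum (fun j => c * h j) K = c * zsum h K.
Proof. unfold zsum. rewrite <- rsum_scal. apply rsum_ext; intros; apply sym_term_scal. Qed.

Lemma zsum_S h K : zsum h (S K) = zsum h K + sym_term h (S K).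
Proof. reflexivity. Qed.

Lemma zsum_nonneg h K : (forall j, 0 <= h j) -> 0 <= zsum h K.
Proof. intros H. apply rsum_nonneg. intros; apply sym_term_nonneg, H. Qed.

Lemma zsum_indicator (G : Z -> R) z K :
  zsum (fun j => G j * ind (Z.eqb z j)) K = if Z.leb (Z.abs z) (Z.of_nat K) then G z else 0.
Proof.
  unfold zsum. induction K as [|K IH].
  - simpl. unfold sym_term, ind; simpl.
    destruct (Z.eqb_spec z 0); subst; simpl; [lra|].
    destruct (Z.leb_spec (Z.abs z) 0); [lia|lra].
  - simpl rsum in *. rewrite IH. unfold sym_term, ind. simpl Nat.eqb.
    destruct (Z.eqb_spec z (Z.of_nat (S K))), (Z.eqb_spec z (- Z.of_nat (S K)));
      destruct (Z.leb_spec (Z.abs z) (Z.of_nat K)), (Z.leb_spec (Z.abs z) (Z.of_nat (S K)));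
      try subst z; lia || lra.
Qed.

Lemma zsum_fiber (G : Z -> R) (f : nat -> Z) M K :
  (forall n, (n < M)%nat -> (Z.abs (f n) <= Z.of_nat K)%Z) ->
  zsum (fun j => G j * rsum (fun n => ind (Z.eqb (f n) j)) M) K = rsum (fun n => G (f n)) M.
Proof.
  induction M as [|M IH]; intros H.
  - simpl. rewrite (zsum_ext _ (fun j => 0 * 0)), zsum_scal by (intros; simpl; ring). ring.
  - simpl rsum. rewrite <- IH by (intros; apply H; lia).
    rewrite (zsum_ext _ _ _ (fun j => Rmult_plus_distr_l _ _ _)), zsum_plus, zsum_indicator.
    specialize (H M ltac:(lia)). destruct (Z.leb_spec (Z.abs (f M)) (Z.of_nat K)); [lra|lia].
Qed.

Lemma zsum_fiber_le (f : nat -> Z) M K :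
  zsum (fun j => rsum (fun n => ind (Z.eqb (f n) j)) M) K <= INR M.
Proof.
  induction M as [|M IH].
  - simpl. rewrite (zsum_ext _ (fun j => 0 * 0)), zsum_scal by (intros; simpl; ring). lra.
  - simpl rsum. rewrite S_INR, zsum_plus.
    rewrite (zsum_ext (fun j => ind (Z.eqb (f M) j)) (fun j => 1 * ind (Z.eqb (f M) j)))
      by (intros; ring).
    rewrite zsum_indicator.
    destruct Z.leb; lra.
Qed.

Lemma zsum_lim (u : nat -> Z -> R) (v : Z -> R) K :
  (forall j, is_lim_seq (fun N => u N j) (v j)) ->
  is_lim_seq (fun N => zsum (u N) K) (zsum v K).
Proof.
  intros H. unfold zsum. induction (S K) as [|n IH]; simpl.
  - apply is_lim_seq_const.
  - apply is_lim_seq_plus'; auto. unfold sym_term. destruct Nat.eqb; auto.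
    apply is_lim_seq_plus'; auto.
Qed.

(** * Window frequencies and the existence of [delta] *)

Lemma INR_pow2 l : INR (2 ^ l) = 2 ^ l.
Proof. rewrite pow_INR. reflexivity. Qed.

Lemma pow2_pos l : 0 < 2 ^ l.
Proof. apply pow_lt; lra. Qed.

Lemma pow2_nat_neq0 l : (2 ^ l <> 0)%nat.
Proof. apply Nat.pow_nonzero; lia. Qed.

Lemma INR_sub_ge a b : INR a - INR b <= INR (a - b).
Proof.
  destruct (Nat.le_gt_cases b a); [rewrite minus_INR by auto; lra|].
  assert (INR a < INR b) by (apply lt_INR; auto). pose proof (pos_INR (a - b)). lra.
Qed.

Definition hits (j : Z) (t n : nat) : R := ind (Z.eqb (digit_diff t n) j).

Definition window_count (j : Z) (t l : nat) : R := rsum (hits j t) (2 ^ l - t).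

Definition window_freq (j : Z) (t l : nat) : R := window_count j t l / 2 ^ l.

Definition freq (j : Z) (t N : nat) : R := INR (count_diff j t N) / INR N.

Lemma count_diff_hits j t N : INR (count_diff j t N) = rsum (hits j t) N.
Proof.
  induction N as [|N IH]; [reflexivity|]. unfold count_diff in *.
  rewrite seq_S, filter_app, length_app, plus_INR, IH. simpl rsum. f_equal.
  unfold hits, digit_diff; simpl. destruct Z.eqb; simpl; lra.
Qed.

Lemma hits_block_bounds j t l c :
  window_count j t l <= rsum (fun i => hits j t (c * 2 ^ l + i)%nat) (2 ^ l)
                     <= window_count j t l + INR t.
Proof.
  set (X := (2 ^ l - t)%nat).
  set (g := fun i => hits j t (c * 2 ^ l + i)%nat).
  assert (E : rsum g (2 ^ l) = window_count j t l + rsum (fun i => g (X + i)%nat) (2 ^ l - X)).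
  { replace (rsum g (2 ^ l)) with (rsum g (X + (2 ^ l - X))) by (f_equal; unfold X; lia).
    rewrite rsum_add_range. f_equal.
    apply rsum_ext. intros i Hi. unfold g, hits. rewrite digit_diff_mul_pow2_add; auto.
    unfold X in Hi; lia. }
  rewrite E.
  pose proof (rsum_le_card (fun i => g (X + i)%nat) (2 ^ l - X) (fun _ => ind_bounds _)).
  assert (INR (2 ^ l - X) <= INR t) by (apply le_INR; unfold X; lia). lra.
Qed.

Lemma hits_blocks_bounds j t l a :
  INR a * window_count j t l <= rsum (hits j t) (a * 2 ^ l)
                              <= INR a * (window_count j t l + INR t).
Proof.
  induction a as [|a IH]; [simpl; lra|].
  replace (S a * 2 ^ l)%nat with (a * 2 ^ l + 2 ^ l)%nat by lia.
  rewrite rsum_add_range, S_INR. pose proof (hits_block_bounds j t l a). lra.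
Qed.

Lemma count_diff_bounds j t l N :
  INR (N / 2 ^ l) * window_count j t l <= INR (count_diff j t N)
    <= INR (N / 2 ^ l) * (window_count j t l + INR t) + INR (N mod 2 ^ l).
Proof.
  rewrite count_diff_hits.
  replace (rsum (hits j t) N) with (rsum (hits j t) (N / 2 ^ l * 2 ^ l + N mod 2 ^ l))
    by (f_equal; rewrite Nat.mul_comm; symmetry; apply Nat.div_mod_eq).
  rewrite rsum_add_range.
  pose proof (hits_blocks_bounds j t l (N / 2 ^ l)).
  pose proof (rsum_le_card (fun i => hits j t (N / 2 ^ l * 2 ^ l + i)%nat) (N mod 2 ^ l)
     (fun _ => ind_bounds _)).
  lra.
Qed.

Lemma ratio_approx (A B P C S T : R) :
  0 < P -> 0 <= A -> 0 <= B < P -> 0 <= C <= P -> 0 <= T -> 0 < A * P + B ->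
  A * C <= S <= A * (C + T) + B ->
  Rabs (S / (A * P + B) - C / P) <= T / P + P / (A * P + B).
Proof.
  intros HP HA HB HC HT HN HS.
  set (N := A * P + B) in *.
  assert (HNP : 0 < N * P) by nra.
  replace (S / N - C / P) with ((S * P - C * N) * / (N * P)) by (field; lra).
  replace (T / P + P / N) with ((T * N + P * P) * / (N * P)) by (field; lra).
  assert (Hi : 0 <= / (N * P)) by (apply Rlt_le, Rinv_0_lt_compat; lra).
  assert (S * P - C * N <= T * N + P * P) by (unfold N in *; nra).
  assert (- (T * N + P * P) <= S * P - C * N) by (unfold N in *; nra).
  apply Rabs_le. split.
  - rewrite Ropp_mult_distr_l. apply Rmult_le_compat_r; auto.
  - apply Rmult_le_compat_r; auto.
Qed.

Lemma freq_approx j t l N : (1 <= N)%nat ->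
  Rabs (freq j t N - window_freq j t l) <= INR t / 2 ^ l + 2 ^ l / INR N.
Proof.
  intros HN. unfold freq, window_freq.
  pose proof (Nat.mod_upper_bound N (2 ^ l) (pow2_nat_neq0 l)).
  assert (EN : INR N = INR (N / 2 ^ l) * 2 ^ l + INR (N mod 2 ^ l)).
  { rewrite <- INR_pow2, <- mult_INR, <- plus_INR. f_equal.
    rewrite Nat.mul_comm. apply Nat.div_mod_eq. }
  assert (0 < INR N) by (apply lt_0_INR; lia).
  assert (INR (N mod 2 ^ l) < 2 ^ l) by (rewrite <- INR_pow2; apply lt_INR; lia).
  assert (INR (2 ^ l - t) <= 2 ^ l) by (rewrite <- INR_pow2; apply le_INR; lia).
  pose proof (rsum_le_card (hits j t) (2 ^ l - t) (fun _ => ind_bounds _)).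
  rewrite EN. apply ratio_approx.
  all: try (apply pos_INR || apply pow2_pos); unfold window_count; try lra.
  - pose proof (pos_INR (N mod 2 ^ l)). lra.
  - apply count_diff_bounds.
Qed.

Lemma div_lt_eventually (P e : R) : 0 < e ->
  exists n, forall x, INR n <= x -> 0 < x -> P / x < e.
Proof.
  intros He. destruct (INR_archimed e P He) as [n Hn]. exists n. intros x Hx Hx0.
  apply Rmult_lt_reg_r with x; auto. unfold Rdiv. rewrite Rmult_assoc, Rinv_l by lra. nra.
Qed.

Lemma INR_le_pow2 n : INR n <= 2 ^ n.
Proof.
  induction n; [simpl; lra|]. rewrite S_INR. simpl.
  assert (1 <= 2 ^ n) by (apply pow_R1_Rle; lra). lra.
Qed.

Lemma freq_cauchy j t : ex_lim_seq_cauchy (freq j t).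
Proof.
  intros [eps Heps]. simpl.
  destruct (div_lt_eventually (INR t) (eps / 4)) as [l Hl]; [lra|].
  destruct (div_lt_eventually (2 ^ l) (eps / 4)) as [N0 HN]; [lra|].
  exists (S N0). intros n m Hn Hm.
  assert (forall N, (S N0 <= N)%nat -> Rabs (freq j t N - window_freq j t l) < eps / 2) as Happrox.
  { intros N HN0. eapply Rle_lt_trans; [apply freq_approx; lia|].
    assert (INR t / 2 ^ l < eps / 4) by (apply Hl; [apply INR_le_pow2 | apply pow2_pos]).
    assert (2 ^ l / INR N < eps / 4).
    { apply HN; [apply le_INR; lia | apply lt_0_INR; lia]. }
    lra. }
  pose proof (Happrox n Hn). pose proof (Happrox m Hm).
  replace (freq j t n - freq j t m)
    with ((freq j t n - window_freq j t l) - (freq j t m - window_freq j t l)) by ring.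
  eapply Rle_lt_trans; [apply Rabs_triang|]. rewrite Rabs_Ropp. lra.
Qed.

Lemma delta_is_lim j t : is_lim_seq (freq j t) (delta j t).
Proof.
  destruct (proj2 (ex_lim_seq_cauchy_corr _) (freq_cauchy j t)) as [L HL].
  unfold delta. fold (freq j t). rewrite (is_lim_seq_unique _ _ HL). exact HL.
Qed.

Lemma window_freq_le_delta j t l : window_freq j t l <= delta j t.
Proof.
  set (phi := fun a => (S a * 2 ^ l)%nat).
  assert (Hphi : filterlim phi eventually eventually).
  { apply eventually_subseq. intros n. unfold phi. pose proof (pow2_nat_neq0 l). nia. }
  refine (is_lim_seq_le _ _ _ _ _ (is_lim_seq_const _)
           (is_lim_seq_subseq _ _ phi Hphi (delta_is_lim j t))).
  intros a. unfold freq, window_freq, phi.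
  destruct (count_diff_bounds j t l (S a * 2 ^ l)) as [Hlow _].
  rewrite Nat.div_mul in Hlow by apply pow2_nat_neq0.
  rewrite mult_INR, INR_pow2. pose proof (pow2_pos l).
  assert (0 < INR (S a)) by (apply lt_0_INR; lia).
  apply Rmult_le_reg_r with (INR (S a) * 2 ^ l); [nra|].
  replace (window_count j t l / 2 ^ l * (INR (S a) * 2 ^ l))
    with (INR (S a) * window_count j t l) by (field; lra).
  replace (INR (count_diff j t (S a * 2 ^ l)) / (INR (S a) * 2 ^ l) * (INR (S a) * 2 ^ l))
    with (INR (count_diff j t (S a * 2 ^ l))) by (field; lra).
  exact Hlow.
Qed.

Lemma delta_nonneg j t : 0 <= delta j t.
Proof.
  eapply Rle_trans; [|apply (window_freq_le_delta j t 0)].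
  unfold window_freq, window_count.
  pose proof (rsum_le_card (hits j t) (2 ^ 0 - t) (fun _ => ind_bounds _)).
  simpl pow. lra.
Qed.

Lemma zsum_delta_le_1 t K : zsum (fun j => delta j t) K <= 1.
Proof.
  assert (Hev : eventually (fun N => zsum (fun j => freq j t N) K <= 1)).
  { exists 1%nat. intros N HN. assert (0 < INR N) by (apply lt_0_INR; lia).
    rewrite (zsum_ext _ (fun j => / INR N * rsum (fun n => ind (Z.eqb (digit_diff t n) j)) N)).
    2:{ intros j. unfold freq. rewrite count_diff_hits. unfold hits, Rdiv. ring. }
    rewrite zsum_scal. pose proof (zsum_fiber_le (digit_diff t) N K).
    apply Rmult_le_reg_l with (INR N); auto. rewrite <- Rmult_assoc, Rinv_r by lra. lra. }
  exact (is_lim_seq_le_loc _ _ _ _ Hev (zsum_lim _ _ K (fun j => delta_is_lim j t))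
           (is_lim_seq_const 1)).
Qed.

(** * Moments as limits of window means *)

Lemma zsum_window_freq t l K : (l <= K)%nat ->
  zsum (fun j => window_freq j t l) K = INR (2 ^ l - t) / 2 ^ l.
Proof.
  intros HK.
  rewrite (zsum_ext _ (fun j => / 2 ^ l * (1 * rsum (fun n => ind (Z.eqb (digit_diff t n) j))
                                                      (2 ^ l - t)))).
  2:{ intros j. unfold window_freq, window_count, hits, Rdiv. ring. }
  rewrite zsum_scal, zsum_fiber by (intros; apply (digit_diff_window_bound t l); auto).
  rewrite rsum_const. unfold Rdiv. ring.
Qed.

Lemma zsum_delta_window_gap t l K : (l <= K)%nat ->
  zsum (fun j => delta j t - window_freq j t l) K <= INR t / 2 ^ l.
Proof.
  intros HK. rewrite zsum_minus, zsum_window_freq by auto.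
  pose proof (zsum_delta_le_1 t K). pose proof (INR_sub_ge (2 ^ l) t).
  rewrite INR_pow2 in H0. pose proof (pow2_pos l).
  assert (1 - INR t / 2 ^ l <= INR (2 ^ l - t) / 2 ^ l).
  { apply Rmult_le_reg_r with (2 ^ l); auto. unfold Rdiv.
    rewrite Rmult_assoc, Rinv_l by lra. field_simplify; lra. }
  lra.
Qed.

Lemma window_freq_out_of_range j t l : (Z.of_nat l < Z.abs j)%Z -> window_freq j t l = 0.
Proof.
  intros H. unfold window_freq, window_count.
  rewrite (rsum_ext _ (fun _ => 0)), rsum_const by
    (intros i Hi; unfold hits, ind; pose proof (digit_diff_bound t l i ltac:(lia));
     destruct (Z.eqb_spec (digit_diff t i) j); [lia | auto]).
  unfold Rdiv; ring.
Qed.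

Lemma sym_term_delta_le t k : (1 <= k)%nat ->
  sym_term (fun j => delta j t) k <= INR t / 2 ^ (k - 1).
Proof.
  intros Hk. destruct k as [|k]; [lia|]. replace (S k - 1)%nat with k by lia.
  pose proof (zsum_delta_window_gap t k (S k) ltac:(lia)) as Hgap.
  rewrite zsum_S in Hgap.
  assert (0 <= zsum (fun j => delta j t - window_freq j t k) k).
  { apply zsum_nonneg. intros j. pose proof (window_freq_le_delta j t k). lra. }
  replace (sym_term (fun j => delta j t) (S k))
    with (sym_term (fun j => delta j t - window_freq j t k) (S k)); [lra|].
  unfold sym_term. cbn [Nat.eqb]. rewrite !window_freq_out_of_range by lia. ring.
Qed.

Definition window_mean (l : nat) (G : Z -> R) (t : nat) : R :=
  rsum (fun n => G (digit_diff t n)) (2 ^ l - t) / 2 ^ l.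

Lemma window_mean_zsum l G t K : (l <= K)%nat ->
  window_mean l G t = zsum (fun j => G j * window_freq j t l) K.
Proof.
  intros HK. unfold window_mean.
  rewrite <- zsum_fiber with (K := K) by (intros; apply (digit_diff_window_bound t l); auto).
  unfold Rdiv. rewrite Rmult_comm, <- zsum_scal. apply zsum_ext. intros j.
  unfold window_freq, window_count, hits, Rdiv. ring.
Qed.

Lemma cube_le_geom k : INR k ^ 3 <= 21 * (3 / 2) ^ k.
Proof.
  assert (Hbig : forall n, INR (n + 7) ^ 3 <= 21 * (3 / 2) ^ (n + 7)).
  { induction n as [|n IH]; [simpl; lra|].
    replace (S n + 7)%nat with (S (n + 7)) by lia. rewrite S_INR. simpl pow at 2.
    assert (7 <= INR (n + 7)) by (rewrite plus_INR; simpl; pose proof (pos_INR n); lra).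
    set (y := INR (n + 7)) in *.
    assert ((y + 1) ^ 3 <= 3 / 2 * y ^ 3) by (simpl; nra).
    lra. }
  destruct (Nat.le_gt_cases 7 k).
  - replace k with ((k - 7) + 7)%nat by lia. apply Hbig.
  - do 7 (destruct k as [|k]; [simpl; lra|]). lia.
Qed.

Lemma pow_abs_le_cube r j : (1 <= r <= 3)%nat -> Rabs (IZR j ^ r) <= Rabs (IZR j) ^ 3.
Proof.
  intros Hr. rewrite <- RPow_abs.
  destruct (Z.eq_dec j 0) as [->|Hj].
  - rewrite Rabs_R0. destruct r; [lia|]. simpl. lra.
  - apply Rle_pow; [|lia]. rewrite <- abs_IZR. apply IZR_le. lia.
Qed.

Lemma sym_term_pow_bound r h k : (1 <= r <= 3)%nat -> (forall j, 0 <= h j) ->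
  Rabs (sym_term (fun j => IZR j ^ r * h j) k) <= INR k ^ 3 * sym_term h k.
Proof.
  intros Hr Hh. unfold sym_term. destruct (Nat.eqb_spec k 0) as [->|Hk].
  - pose proof (pow_abs_le_cube r 0 Hr). rewrite Rabs_R0 in H.
    rewrite Rabs_mult, (Rabs_pos_eq (h 0%Z)) by auto.
    pose proof (Hh 0%Z). simpl in *. nra.
  - eapply Rle_trans; [apply Rabs_triang|]. rewrite !Rabs_mult.
    rewrite (Rabs_pos_eq (h _)), (Rabs_pos_eq (h (- _)%Z)) by auto.
    pose proof (pow_abs_le_cube r (Z.of_nat k) Hr).
    pose proof (pow_abs_le_cube r (- Z.of_nat k)%Z Hr).
    rewrite opp_IZR, Rabs_Ropp, <- INR_IZR_INZ, (Rabs_pos_eq (INR k) (pos_INR k)) in *.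
    pose proof (Hh (Z.of_nat k)). pose proof (Hh (- Z.of_nat k)%Z). nra.
Qed.

Lemma geom_tail_le q l n : 0 <= q < 1 ->
  rsum (fun k => if Nat.ltb l k then q ^ k else 0) n <= q ^ S l / (1 - q).
Proof.
  intros Hq.
  assert (E : rsum (fun k => if Nat.ltb l k then q ^ k else 0) n
              = (q ^ S l - q ^ Nat.max n (S l)) / (1 - q)).
  { induction n as [|n IH]; simpl rsum; [cbn [Nat.max]; field; lra|].
    rewrite IH. destruct (Nat.ltb_spec l n).
    - rewrite !Nat.max_l by lia. change (q ^ S n) with (q * q ^ n). field. lra.
    - rewrite !Nat.max_r by lia. field. lra. }
  rewrite E. apply Rmult_le_compat_r; [apply Rlt_le, Rinv_0_lt_compat; lra|].
  pose proof (pow_le q (Nat.max n (S l)) (proj1 Hq)). lra.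
Qed.

Lemma is_lim_seq_approx (u : nat -> R) (L : R) (a eps : nat -> R) :
  is_lim_seq u L -> is_lim_seq eps 0 ->
  (forall l K, (l <= K)%nat -> Rabs (u K - a l) <= eps l) -> is_lim_seq a L.
Proof.
  intros Hu Heps Happrox.
  assert (Hl : forall l, Rabs (L - a l) <= eps l).
  { intros l.
    refine (is_lim_seq_le_loc (fun K => Rabs (u K - a l)) (fun _ => eps l) _ _ _
              (is_lim_seq_abs _ (L - a l) _) (is_lim_seq_const _)).
    - exists l. apply Happrox.
    - apply is_lim_seq_minus' with (l1 := L) (l2 := a l); [exact Hu | apply is_lim_seq_const]. }
  apply is_lim_seq_le_le with (u := fun l => L - eps l) (w := fun l => L + eps l).
  - intros l. pose proof (Hl l) as H. apply Rabs_le_between in H. lra.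
  - replace (Finite L) with (Finite (L - 0)) by (f_equal; ring).
    apply is_lim_seq_minus'; [apply is_lim_seq_const | exact Heps].
  - replace (Finite L) with (Finite (L + 0)) by (f_equal; ring).
    apply is_lim_seq_plus'; [apply is_lim_seq_const | exact Heps].
Qed.

Lemma pow_3_4_mul_pow2 k : (3 / 4) ^ k * 2 ^ k = (3 / 2) ^ k.
Proof. rewrite <- Rpow_mult_distr. f_equal. lra. Qed.

Lemma sum_n_rsum (a : nat -> R) n : sum_n a n = rsum a (S n).
Proof.
  induction n as [|n IH]; [rewrite sum_O; simpl; ring|].
  rewrite sum_Sn, IH. reflexivity.
Qed.

Section MomentLimit.

Variables r t : nat.
Hypothesis Hr : (1 <= r <= 3)%nat.

Definition moment_term (k : nat) : R := sym_term (fun j => IZR j ^ r * delta j t) k.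

(* [k ^ 3 <= 21 (3/2) ^ k], and [delta . t] has mass at most [t / 2 ^ (k - 1)] at [|j| = k]. *)
Lemma moment_term_bound k : Rabs (moment_term k) <= 42 * INR t * (3 / 4) ^ k.
Proof.
  unfold moment_term.
  eapply Rle_trans; [apply sym_term_pow_bound; [auto | intros; apply delta_nonneg]|].
  assert (0 <= sym_term (fun j => delta j t) k)
    by (apply sym_term_nonneg; intros; apply delta_nonneg).
  pose proof (pos_INR t). pose proof (pow_lt (3 / 4) k ltac:(lra)).
  destruct k as [|k]; [simpl; nra|].
  pose proof (sym_term_delta_le t (S k) ltac:(lia)) as Hdelta.
  replace (S k - 1)%nat with k in Hdelta by lia.
  eapply Rle_trans.
  { apply Rmult_le_compat; [apply pow_le, pos_INR | auto | apply cube_le_geom | exact Hdelta]. }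
  rewrite <- pow_3_4_mul_pow2. pose proof (pow2_pos k). simpl pow. right. field. lra.
Qed.

Lemma moment_term_ex_series : ex_series moment_term.
Proof.
  apply (@ex_series_le R_AbsRing R_CompleteNormedModule _ (fun k => 42 * INR t * (3 / 4) ^ k)).
  - intros; apply moment_term_bound.
  - apply (ex_series_scal_l (42 * INR t) (fun k => (3 / 4) ^ k)).
    exists (/ (1 - 3 / 4)). apply is_series_geom. rewrite Rabs_pos_eq; lra.
Qed.

Lemma moment_eq_Series : moment r t = Series moment_term.
Proof.
  unfold moment. apply Series_ext. intros k. unfold moment_term, sym_term.
  destruct (Nat.eqb k 0); [reflexivity|].
  rewrite opp_IZR, <- INR_IZR_INZ. reflexivity.
Qed.

Lemma moment_term_window_gap l k :
  Rabs (moment_term k - sym_term (fun j => IZR j ^ r * window_freq j t l) k)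
    <= INR l ^ 3 * sym_term (fun j => delta j t - window_freq j t l) k
       + 42 * INR t * (if Nat.ltb l k then (3 / 4) ^ k else 0).
Proof.
  unfold moment_term. rewrite <- sym_term_minus.
  rewrite (sym_term_ext _ (fun j => IZR j ^ r * (delta j t - window_freq j t l)))
    by (intros; ring).
  assert (Hgap : 0 <= sym_term (fun j => delta j t - window_freq j t l) k).
  { apply sym_term_nonneg. intros j. pose proof (window_freq_le_delta j t l). lra. }
  assert (0 <= INR l ^ 3) by (apply pow_le, pos_INR).
  destruct (Nat.ltb_spec l k).
  - (* beyond [l] the window frequencies vanish *)
    replace (sym_term (fun j => IZR j ^ r * (delta j t - window_freq j t l)) k)
      with (moment_term k).
    2:{ unfold moment_term, sym_term. destruct (Nat.eqb_spec k 0); [lia|].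
        rewrite !window_freq_out_of_range by lia. f_equal; ring. }
    pose proof (moment_term_bound k). nra.
  - eapply Rle_trans.
    { apply sym_term_pow_bound; auto. intros j. pose proof (window_freq_le_delta j t l). lra. }
    assert (INR k ^ 3 <= INR l ^ 3)
      by (apply pow_incr; split; [apply pos_INR | apply le_INR; lia]).
    pose proof (pos_INR t). nra.
Qed.

(* The first term bounds [l ^ 3] times the missing window mass [t / 2 ^ l]; the
   second bounds the moment terms with [k > l] by [moment_term_bound]. *)
Definition window_error (l : nat) : R :=
  21 * INR t * (3 / 4) ^ l + 168 * INR t * (3 / 4) ^ S l.

Lemma window_error_lim : is_lim_seq window_error 0.
Proof.
  unfold window_error.
  replace 0 with (21 * INR t * 0 + 168 * INR t * 0) by ring.
  assert (Hgeom : is_lim_seq (fun l => (3 / 4) ^ l) 0)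
    by (apply is_lim_seq_geom; rewrite Rabs_pos_eq; lra).
  apply is_lim_seq_plus'; apply is_lim_seq_scal_l with (lu := Finite 0); auto.
  apply (is_lim_seq_incr_1 (fun l => (3 / 4) ^ l) 0), Hgeom.
Qed.

Lemma moment_partial_window_close l K : (l <= K)%nat ->
  Rabs (sum_n moment_term K - window_mean l (fun j => IZR j ^ r) t) <= window_error l.
Proof.
  intros HK. rewrite sum_n_rsum, (window_mean_zsum l _ t K HK). unfold zsum.
  rewrite <- rsum_minus. eapply Rle_trans; [apply rsum_abs|].
  eapply Rle_trans; [apply rsum_le; intros k _; apply moment_term_window_gap|].
  rewrite rsum_plus, !rsum_scal. fold (zsum (fun j => delta j t - window_freq j t l) K).
  pose proof (zsum_delta_window_gap t l K HK) as Hgap.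
  pose proof (geom_tail_le (3 / 4) l (S K) ltac:(lra)) as Htail.
  assert (0 <= INR l ^ 3) by (apply pow_le, pos_INR).
  assert (INR l ^ 3 * (INR t / 2 ^ l) <= 21 * INR t * (3 / 4) ^ l).
  { pose proof (cube_le_geom l). pose proof (pow2_pos l). pose proof (pos_INR t).
    rewrite <- pow_3_4_mul_pow2 in H0.
    replace (INR l ^ 3 * (INR t / 2 ^ l)) with (INR l ^ 3 * INR t / 2 ^ l) by (field; lra).
    apply Rmult_le_reg_r with (2 ^ l); auto. unfold Rdiv.
    rewrite Rmult_assoc, Rinv_l by lra. nra. }
  pose proof (pos_INR t).
  replace ((3 / 4) ^ S l / (1 - 3 / 4)) with (4 * (3 / 4) ^ S l) in Htail by field.
  unfold window_error.
  assert (INR l ^ 3 * zsum (fun j => delta j t - window_freq j t l) K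
          <= INR l ^ 3 * (INR t / 2 ^ l)) by (apply Rmult_le_compat_l; auto).
  assert (42 * INR t * rsum (fun k => if Nat.ltb l k then (3 / 4) ^ k else 0) (S K)
          <= 42 * INR t * (4 * (3 / 4) ^ S l)) by (apply Rmult_le_compat_l; lra).
  lra.
Qed.

Lemma window_mean_moment_lim :
  is_lim_seq (fun l => window_mean l (fun j => IZR j ^ r) t) (moment r t).
Proof.
  rewrite moment_eq_Series.
  apply (is_lim_seq_approx (sum_n moment_term) _ _ window_error).
  - exact (Series_correct _ moment_term_ex_series).
  - exact window_error_lim.
  - exact moment_partial_window_close.
Qed.

End MomentLimit.

(** * Recurrences for the moments *)

Lemma is_lim_seq_eq (u : nat -> R) (a b : R) : is_lim_seq u a -> is_lim_seq u b -> a = b.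
Proof.
  intros Ha Hb. apply is_lim_seq_unique in Ha, Hb. rewrite Ha in Hb. now injection Hb.
Qed.

Lemma window_mean_ext l G1 G2 t :
  (forall j, G1 j = G2 j) -> window_mean l G1 t = window_mean l G2 t.
Proof. intros H. unfold window_mean. f_equal. apply rsum_ext. intros; apply H. Qed.

Lemma window_mean_double l G t : window_mean (S l) G (2 * t) = window_mean l G t.
Proof.
  unfold window_mean.
  replace (2 ^ S l - 2 * t)%nat with (2 * (2 ^ l - t))%nat by (rewrite Nat.pow_succ_r'; lia).
  rewrite rsum_double.
  rewrite (rsum_ext _ (fun i => 2 * G (digit_diff t i)))
    by (intros; rewrite digit_diff_even_even, digit_diff_even_odd; ring).
  rewrite rsum_scal. simpl pow. field. apply pow_nonzero; lra.
Qed.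

Lemma window_mean_double_add1 l G t : window_mean (S l) G (2 * t + 1) =
  / 2 * (window_mean l (fun j => G (j + 1)%Z) t + window_mean l (fun j => G (j - 1)%Z) (t + 1)).
Proof.
  unfold window_mean.
  replace (2 ^ S l - (2 * t + 1))%nat with (2 * (2 ^ l - t) - 1)%nat
    by (rewrite Nat.pow_succ_r'; lia).
  rewrite rsum_double_pred. replace (2 ^ l - t - 1)%nat with (2 ^ l - (t + 1))%nat by lia.
  rewrite (rsum_ext _ (fun i => G (digit_diff t i + 1)%Z) (2 ^ l - t))
    by (intros; rewrite digit_diff_odd_even; ring).
  rewrite (rsum_ext _ (fun i => G (digit_diff (t + 1) i - 1)%Z) (2 ^ l - (t + 1)))
    by (intros; rewrite digit_diff_odd_odd; ring).
  simpl pow. field. apply pow_nonzero; lra.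
Qed.

Lemma window_mean_one_lim t : is_lim_seq (fun l => window_mean l (fun _ => 1) t) 1.
Proof.
  apply is_lim_seq_le_le with (u := fun l => 1 - INR t * (/ 2) ^ l) (w := fun _ => 1).
  - intros l. unfold window_mean. rewrite rsum_const, Rmult_1_l, pow_inv.
    pose proof (pow2_pos l). pose proof (INR_sub_ge (2 ^ l) t). rewrite INR_pow2 in H0.
    assert (INR (2 ^ l - t) <= 2 ^ l) by (rewrite <- INR_pow2; apply le_INR; lia).
    split; apply Rmult_le_reg_r with (2 ^ l); auto; unfold Rdiv;
      rewrite Rmult_assoc, Rinv_l by lra; [field_simplify|]; lra.
  - replace (Finite 1) with (Finite (1 - INR t * 0)) by (f_equal; ring).
    apply is_lim_seq_minus'; [apply is_lim_seq_const|].
    apply is_lim_seq_scal_l with (lu := Finite 0).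
    apply is_lim_seq_geom. rewrite Rabs_pos_eq; lra.
  - apply is_lim_seq_const.
Qed.

Lemma window_mean_cubic l a b c d t :
  window_mean l (fun j => a + b * IZR j + c * IZR j ^ 2 + d * IZR j ^ 3) t
  = a * window_mean l (fun _ => 1) t + b * window_mean l (fun j => IZR j ^ 1) t
    + c * window_mean l (fun j => IZR j ^ 2) t + d * window_mean l (fun j => IZR j ^ 3) t.
Proof.
  unfold window_mean.
  rewrite (rsum_ext _ (fun n => a * 1 + b * IZR (digit_diff t n) ^ 1
                                + c * IZR (digit_diff t n) ^ 2 + d * IZR (digit_diff t n) ^ 3))
    by (intros; ring).
  rewrite !rsum_plus, !rsum_scal. unfold Rdiv. ring.
Qed.

Lemma window_mean_cubic_lim a b c d t :
  is_lim_seq (fun l => window_mean l (fun j => a + b * IZR j + c * IZR j ^ 2 + d * IZR j ^ 3) t)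
             (a + b * moment 1 t + c * moment 2 t + d * moment 3 t).
Proof.
  eapply is_lim_seq_ext; [intros l; symmetry; apply window_mean_cubic|].
  replace (a + b * moment 1 t + c * moment 2 t + d * moment 3 t)
    with (a * 1 + b * moment 1 t + c * moment 2 t + d * moment 3 t) by ring.
  repeat apply is_lim_seq_plus'; apply is_lim_seq_scal_l with (lu := Finite _).
  - apply window_mean_one_lim.
  all: apply window_mean_moment_lim; lia.
Qed.

Lemma moment_double r t : (1 <= r <= 3)%nat -> moment r (2 * t) = moment r t.
Proof.
  intros Hr. apply (is_lim_seq_eq (fun l => window_mean (S l) (fun j => IZR j ^ r) (2 * t))).
  - apply (is_lim_seq_incr_1 (fun l => window_mean l _ (2 * t))), window_mean_moment_lim, Hr.
  - eapply is_lim_seq_ext; [intros l; symmetry; apply window_mean_double|].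
    apply window_mean_moment_lim, Hr.
Qed.

Lemma moment_double_add1 r t a b c d a' b' c' d' : (1 <= r <= 3)%nat ->
  (forall j, IZR (j + 1) ^ r = a + b * IZR j + c * IZR j ^ 2 + d * IZR j ^ 3) ->
  (forall j, IZR (j - 1) ^ r = a' + b' * IZR j + c' * IZR j ^ 2 + d' * IZR j ^ 3) ->
  moment r (2 * t + 1)
  = / 2 * ((a + b * moment 1 t + c * moment 2 t + d * moment 3 t)
           + (a' + b' * moment 1 (t + 1) + c' * moment 2 (t + 1) + d' * moment 3 (t + 1))).
Proof.
  intros Hr Hplus Hminus.
  apply (is_lim_seq_eq (fun l => window_mean (S l) (fun j => IZR j ^ r) (2 * t + 1))).
  - apply (is_lim_seq_incr_1 (fun l => window_mean l _ (2 * t + 1))), window_mean_moment_lim, Hr.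
  - eapply is_lim_seq_ext.
    { intros l. symmetry. rewrite window_mean_double_add1. cbv beta.
      rewrite (window_mean_ext _ _ _ t Hplus), (window_mean_ext _ _ _ (t + 1) Hminus).
      reflexivity. }
    apply is_lim_seq_scal_l with (lu := Finite _), is_lim_seq_plus';
      apply window_mean_cubic_lim.
Qed.

Lemma moment1_double_add1 t : moment 1 (2 * t + 1) = (moment 1 t + moment 1 (t + 1)) / 2.
Proof.
  rewrite (moment_double_add1 1 t 1 1 0 0 (-1) 1 0 0);
    [lra | lia | intros; rewrite plus_IZR; ring | intros; rewrite minus_IZR; ring].
Qed.

Lemma moment2_double_add1_general t : moment 2 (2 * t + 1) =
  (moment 2 t + 2 * moment 1 t + moment 2 (t + 1) - 2 * moment 1 (t + 1)) / 2 + 1.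
Proof.
  rewrite (moment_double_add1 2 t 1 2 1 0 1 (-2) 1 0);
    [lra | lia | intros; rewrite plus_IZR; ring | intros; rewrite minus_IZR; ring].
Qed.

Lemma moment3_double_add1_general t : moment 3 (2 * t + 1) =
  (moment 3 t + 3 * moment 2 t + 3 * moment 1 t
   + moment 3 (t + 1) - 3 * moment 2 (t + 1) + 3 * moment 1 (t + 1)) / 2.
Proof.
  rewrite (moment_double_add1 3 t 1 3 3 1 (-1) 3 (-3) 1);
    [lra | lia | intros; rewrite plus_IZR; ring | intros; rewrite minus_IZR; ring].
Qed.

Lemma moment_at_0 r : (1 <= r <= 3)%nat -> moment r 0 = 0.
Proof.
  intros Hr. apply (is_lim_seq_eq (fun l => window_mean l (fun j => IZR j ^ r) 0)).
  - apply window_mean_moment_lim, Hr.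
  - apply is_lim_seq_ext with (u := fun _ => 0); [|apply is_lim_seq_const].
    intros l. unfold window_mean.
    rewrite (rsum_ext _ (fun _ => 0)), rsum_const; [unfold Rdiv; ring|].
    intros i _. unfold digit_diff. rewrite Nat.add_0_r, Z.sub_diag.
    destruct r; [lia | simpl; ring].
Qed.

Lemma nat_even_or_odd n : exists u, n = (2 * u)%nat \/ n = (2 * u + 1)%nat.
Proof. destruct (Nat.Even_or_Odd n) as [[u Hu]|[u Hu]]; exists u; lia. Qed.

Lemma moment1_eq_0 t : moment 1 t = 0.
Proof.
  induction t as [t IH] using lt_wf_ind.
  destruct (nat_even_or_odd t) as [u [-> | ->]].
  - destruct u as [|u]; [apply moment_at_0; lia|].
    rewrite moment_double by lia. apply IH. lia.
  - rewrite moment1_double_add1. destruct u as [|u].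
    + (* at [t = 1] the recurrence refers to [moment 1 1] itself *)
      pose proof (moment1_double_add1 0) as H1. rewrite moment_at_0 in * by lia.
      simpl in *. lra.
    + rewrite (IH (S u)), (IH (S u + 1)%nat) by lia. lra.
Qed.

Lemma moment2_double_add1 t : moment 2 (2 * t + 1) = (moment 2 t + moment 2 (t + 1)) / 2 + 1.
Proof. rewrite moment2_double_add1_general, !moment1_eq_0. lra. Qed.

Lemma moment3_double_add1 t : moment 3 (2 * t + 1) =
  (moment 3 t + moment 3 (t + 1)) / 2 + 3 / 2 * (moment 2 t - moment 2 (t + 1)).
Proof. rewrite moment3_double_add1_general, !moment1_eq_0. lra. Qed.

Lemma moment2_step_bound t : Rabs (moment 2 t - moment 2 (t + 1)) <= 2.
Proof.
  induction t as [t IH] using lt_wf_ind. apply Rabs_le.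
  destruct (nat_even_or_odd t) as [u [-> | ->]].
  - rewrite moment_double, moment2_double_add1 by lia.
    destruct u as [|u].
    + (* the step at [0] satisfies [x = x / 2 - 1], hence equals [-2] *)
      pose proof (moment2_double_add1 0) as H0. simpl in *. lra.
    + specialize (IH (S u) ltac:(lia)). apply Rabs_le_between in IH. lra.
  - replace (2 * u + 1 + 1)%nat with (2 * (u + 1))%nat by lia.
    rewrite moment_double, moment2_double_add1 by lia.
    specialize (IH u ltac:(lia)). apply Rabs_le_between in IH. lra.
Qed.

(** * Cumulants and the iteration [u |-> 2u + 1] *)

Lemma cumulant_of_2 (m : nat -> R) : cumulant_of m 2 = m 2%nat - m 1%nat * m 1%nat.
Proof.
  unfold cumulant_of. cbn [cum_aux Nat.eqb seq map fold_right Nat.sub].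
  unfold Binomial.C. simpl. field.
Qed.

Lemma cumulant_of_3 (m : nat -> R) :
  cumulant_of m 3 = m 3%nat - 3 * m 1%nat * m 2%nat + 2 * m 1%nat ^ 3.
Proof.
  unfold cumulant_of. cbn [cum_aux Nat.eqb seq map fold_right Nat.sub].
  unfold Binomial.C. simpl. field.
Qed.

Lemma D_eq_moments t : D t = moment 2 t - moment 3 t / 3.
Proof. unfold D, kappa. rewrite cumulant_of_2, cumulant_of_3, moment1_eq_0. lra. Qed.

Lemma moment_mul_pow2 r j x : (1 <= r <= 3)%nat -> moment r (2 ^ j * x) = moment r x.
Proof.
  intros Hr. induction j as [|j IH]; [now rewrite Nat.mul_1_l|].
  rewrite Nat.pow_succ_r', <- Nat.mul_assoc, moment_double by exact Hr. exact IH.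
Qed.

Lemma D_mul_pow2 j x : D (2 ^ j * x) = D x.
Proof. rewrite !D_eq_moments, !moment_mul_pow2 by lia. reflexivity. Qed.

Lemma D_double_add1 t :
  D (2 * t + 1) = (D t + D (t + 1)) / 2 + 1 - (moment 2 t - moment 2 (t + 1)) / 2.
Proof. rewrite !D_eq_moments, moment2_double_add1, moment3_double_add1. lra. Qed.

Definition odd_chain (t j : nat) : nat := (2 ^ (j + 1) * t + 2 ^ j - 1)%nat.

Lemma odd_chain_0 t : odd_chain t 0 = (2 * t)%nat.
Proof. unfold odd_chain. simpl. lia. Qed.

Lemma odd_chain_S t j : odd_chain t (S j) = (2 * odd_chain t j + 1)%nat.
Proof.
  unfold odd_chain. replace (S j + 1)%nat with (S (j + 1)) by lia.
  rewrite !Nat.pow_succ_r'. pose proof (pow2_nat_neq0 j). lia.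
Qed.

Lemma odd_chain_add1 t j : (odd_chain t j + 1)%nat = (2 ^ j * (2 * t + 1))%nat.
Proof.
  unfold odd_chain. rewrite Nat.pow_add_r. pose proof (pow2_nat_neq0 j). simpl (2 ^ 1)%nat. nia.
Qed.

Lemma moment2_odd_chain_S t j : moment 2 (odd_chain t (S j))
  = (moment 2 (odd_chain t j) + moment 2 (2 * t + 1)) / 2 + 1.
Proof.
  rewrite odd_chain_S, moment2_double_add1, odd_chain_add1, moment_mul_pow2 by lia.
  reflexivity.
Qed.

Lemma D_odd_chain_S t j : D (odd_chain t (S j))
  = (D (odd_chain t j) + D (2 * t + 1)) / 2 + 1
    - (moment 2 (odd_chain t j) - moment 2 (2 * t + 1)) / 2.
Proof.
  rewrite odd_chain_S, D_double_add1, odd_chain_add1, D_mul_pow2, moment_mul_pow2 by lia.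
  reflexivity.
Qed.

Lemma halving_recurrence (x y : nat -> R) :
  (forall j, x (S j) = x j / 2 + 1) -> (forall j, y (S j) = y j / 2 + 1 - x j / 2) ->
  forall j, 2 ^ j * y j = y 0%nat + INR j * (2 - x 0%nat).
Proof.
  intros Hx Hy.
  assert (Hxj : forall j, 2 ^ j * x j = 2 ^ S j - (2 - x 0%nat)).
  { induction j as [|j IH]; [simpl; lra|]. rewrite Hx. simpl pow in *. lra. }
  induction j as [|j IH]; [simpl; lra|].
  rewrite Hy, S_INR. specialize (Hxj j). simpl pow in *. lra.
Qed.

Lemma D_odd_chain_closed_form t k :
  2 ^ k * (D (odd_chain t k) - D (2 * t + 1))
  = D t - D (2 * t + 1) + INR k * (3 - (moment 2 t - moment 2 (t + 1)) / 2).
Proof.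
  rewrite (halving_recurrence (fun j => moment 2 (odd_chain t j) - moment 2 (2 * t + 1))
             (fun j => D (odd_chain t j) - D (2 * t + 1))); cbv beta.
  - rewrite odd_chain_0, moment_double, (D_mul_pow2 1), moment2_double_add1 by lia. lra.
  - intros j. cbv beta. rewrite moment2_odd_chain_S. lra.
  - intros j. cbv beta. rewrite D_odd_chain_S. lra.
Qed.

Theorem corollary2p11 (t k : nat) (hk : (1 <= k)%nat) :
  D (2 ^ (k + 1) * t + 2 ^ k - 1)%nat
    >= Rmin (D t) (D (t + 1)%nat) + INR k / 2 ^ (k - 1).
Proof.
  change (2 ^ (k + 1) * t + 2 ^ k - 1)%nat with (odd_chain t k).
  pose proof (D_odd_chain_closed_form t k) as Hk.
  pose proof (D_double_add1 t) as HQ.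
  pose proof (moment2_step_bound t) as Hstep. apply Rabs_le_between in Hstep.
  pose proof (Rmin_l (D t) (D (t + 1))). pose proof (Rmin_r (D t) (D (t + 1))).
  set (q := 2 ^ (k - 1)).
  assert (Hq2 : 2 ^ k = 2 * q) by (unfold q; replace k with (S (k - 1)) at 1 by lia; reflexivity).
  assert (Hq : 1 <= q) by (apply pow_R1_Rle; lra).
  assert (0 <= (2 * q - 1) * (D (2 * t + 1) - Rmin (D t) (D (t + 1))))
    by (apply Rmult_le_pos; lra).
  assert (0 <= INR k * (1 - (moment 2 t - moment 2 (t + 1)) / 2))
    by (apply Rmult_le_pos; [apply pos_INR | lra]).
  apply Rle_ge. rewrite Rplus_comm, <- Rle_minus_r, Rle_div_l by lra.
  rewrite Hq2 in Hk. lra.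
Qed.
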